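(* Let $\mathcal{B}$ be a complete topological ring, let $\mathrm{e}\colon\mathcal{B}\to\mathcal{B}\{T\}$ be a restricted exponential homomorphism and let $s$ be a local slice for $\mathrm{e}$, with $\mathrm{e}(s)=s+s_1T$. Then the image $\sigma\in\widehat{\mathcal{B}_{s_1}}$ of the element $s_1^{-1}s\in\mathcal{B}_{s_1}$ by the separated completion homomorphism is a regular element (non-zero-divisor) of $\widehat{\mathcal{B}_{s_1}}$. Furthermore, if $\widehat{\mathcal{B}_{s_1}}$ is not the zero ring, then $\widehat{\mathrm{e}_{s_1}}(\sigma)=\sigma+T$.
   Context: Conventions: topological rings are linearly topologized with a countable fundamental system of open ideals; homomorphisms are continuous; complete means the canonical map to $\varprojlim_{\mathfrak{a}}\mathcal{B}/\mathfrak{a}$ (open ideals, discrete quotients) is a topological isomorphism. For complete $\mathcal{C}$, $\mathcal{C}\{T\}$, $\mathcal{C}\{T,T'\}$ denote restricted power series (coefficients converging to $0$), topologized by the ideals of series with all coefficients in a given open ideal. A restricted exponential homomorphism is a continuous ring homomorphism $\mathrm{e}\colon\mathcal{C}\to\mathcal{C}\{T\}$, $\mathrm{e}(c)=\sum_i\mathrm{e}_i(c)T^i$, with $\mathrm{e}_0=\mathrm{id}$ and $\sum_{i,j}\mathrm{e}_j(\mathrm{e}_i(c))T'^jT^i=\sum_\ell\mathrm{e}_\ell(c)(T+T')^\ell$ for all $c$. $\mathcal{B}^{\mathrm{e}}=\{b:\mathrm{e}(b)=b\}$. A local slice is $s\in\mathcal{B}$ with $\mathrm{e}(s)$ a polynomial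 of degree $1$ in $T$; writing $\mathrm{e}(s)=s+s_1T$ one has $s_1\in\mathcal{B}^{\mathrm{e}}$. $\widehat{\mathcal{B}_{s_1}}$ is the separated completion of the localization $\mathcal{B}_{s_1}=S^{-1}\mathcal{B}$, $S=\{s_1^n\}_{n\ge0}$, for the linear topology generated by the ideals $S^{-1}\mathfrak{b}$, $\mathfrak{b}$ open in $\mathcal{B}$; $\tilde j\colon\mathcal{B}\to\widehat{\mathcal{B}_{s_1}}$ is the canonical map and $\tilde j_T(\sum b_iT^i)=\sum\tilde j(b_i)T^i$. $\widehat{\mathrm{e}_{s_1}}\colon\widehat{\mathcal{B}_{s_1}}\to\widehat{\mathcal{B}_{s_1}}\{T\}$ is the unique restricted exponential homomorphism with $\tilde j_T\circ\mathrm{e}=\widehat{\mathrm{e}_{s_1}}\circ\tilde j$. *)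

From mathcomp Require Import all_boot all_algebra.
Set Implicit Arguments. Unset Strict Implicit. Unset Printing Implicit Defensive.
Import GRing.Theory.
Local Open Scope ring_scope.

(* Linearly topologized rings with a countable fundamental system of open  *)
(* ideals: the topology of B is given by a decreasing sequence of ideals    *)
(* I 0 ⊇ I 1 ⊇ ... ; the open ideals are those containing some I n.         *)
Definition is_ideal (B : comPzRingType) (P : B -> Prop) : Prop :=
  [/\ P 0, (forall x y, P x -> P y -> P (x + y)) & (forall a x, P x -> P (a * x))].

Definition is_lintop (B : comPzRingType) (I : nat -> B -> Prop) : Prop :=
  (forall n, is_ideal (I n)) /\ (forall n x, I n.+1 x -> I n x).

(* completeness: B -> lim_n B / I n is bijective (it is then automatically a *)
(* homeomorphism); injectivity = separatedness, surjectivity = every        *)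
(* compatible family of classes comes from an element of B.                 *)
Definition complete (B : comPzRingType) (I : nat -> B -> Prop) : Prop :=
  (forall b, (forall n, I n b) -> b = 0) /\
  (forall x : nat -> B, (forall n, I n (x n.+1 - x n)) ->
     exists b, forall n, I n (b - x n)).

(* A "setoid presentation" of a linearly topologized ring: a carrier, a     *)
(* domain predicate (the actual elements), an equality, ring operations and *)
(* the fundamental system of open ideals.  Used both for B itself (Leibniz  *)
(* equality, every element in the domain) and for the separated completion  *)
(* of B_{s1}, realized as the inverse limit of the B_{s1}/S^{-1} I n.       *)
Record sring := SRing {
  car :> Type;
  rdom : car -> Prop;
  req : car -> car -> Prop;
  r0 : car;
  r1 : car;
  radd : car -> car -> car;
  rmul : car -> car -> car;
  ropen : nat -> car -> Prop }.
Arguments rdom : clear implicits.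
Arguments req : clear implicits.
Arguments r0 : clear implicits.
Arguments r1 : clear implicits.
Arguments radd : clear implicits.
Arguments rmul : clear implicits.
Arguments ropen : clear implicits.

Definition rsum (R : sring) (f : nat -> car R) (n : nat) : car R :=
  foldr (fun k acc => radd R (f k) acc) (r0 R) (iota 0 n).

Definition rnat (R : sring) (k : nat) (x : car R) : car R :=
  iter k (radd R x) (r0 R).

(* A restricted exponential homomorphism e : R -> R{T}, e(x) = sum_i e i x T^i:
   - e maps (elements) to restricted series (coefficients -> 0),
   - e is a continuous ring homomorphism R -> R{T} (Cauchy product),
   - e_0 = id,
   - sum_{i,j} e_j(e_i c) T'^j T^i = sum_l e_l(c)(T+T')^l, i.e. comparing the
     coefficients of T^i T'^j : e_j (e_i c) = C(i+j,i) e_{i+j}(c).          *)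
Definition rexp (R : sring) (e : nat -> car R -> car R) : Prop :=
  (forall i x, rdom R x -> rdom R (e i x)) /\
  (forall i x y, rdom R x -> rdom R y -> req R x y -> req R (e i x) (e i y)) /\
  (forall x, rdom R x -> forall n, exists N, forall i, (N <= i)%N -> ropen R n (e i x)) /\
  (forall n, exists m, forall x, rdom R x -> ropen R m x -> forall i, ropen R n (e i x)) /\
  (forall i x y, rdom R x -> rdom R y ->
      req R (e i (radd R x y)) (radd R (e i x) (e i y))) /\
  (forall i x y, rdom R x -> rdom R y ->
      req R (e i (rmul R x y)) (@rsum R (fun k => rmul R (e k x) (e (i - k)%N y)) i.+1)) /\
  (forall i, req R (e i (r1 R)) (if i == 0%N then r1 R else r0 R)) /\
  (forall x, rdom R x -> req R (e 0%N x) x) /\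
  (forall i j x, rdom R x -> req R (e j (e i x)) (@rnat R 'C(i + j, i) (e (i + j)%N x))).

Definition ringS (B : comPzRingType) (I : nat -> B -> Prop) : sring :=
  @SRing B (fun _ => True) eq 0 1 +%R *%R I.

Definition local_slice (B : comPzRingType) (e : nat -> B -> B) (s : B) : Prop :=
  e 1%N s != 0 /\ (forall i, (2 <= i)%N -> e i s = 0).

(* Localization B_u = S^{-1} B, S = {u^n}: the pair (b, k) stands for b/u^k *)
Definition loc_eq (B : comPzRingType) (u : B) (x y : B * nat) : Prop :=
  exists m, u ^+ m * (x.1 * u ^+ y.2 - y.1 * u ^+ x.2) = 0.
Definition loc_add (B : comPzRingType) (u : B) (x y : B * nat) : B * nat :=
  (x.1 * u ^+ y.2 + y.1 * u ^+ x.2, (x.2 + y.2)%N).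
Definition loc_mul (B : comPzRingType) (x y : B * nat) : B * nat :=
  (x.1 * y.1, (x.2 + y.2)%N).
Definition loc_opp (B : comPzRingType) (x : B * nat) : B * nat := (- x.1, x.2).
Definition locI (B : comPzRingType) (I : nat -> B -> Prop) (u : B) (n : nat)
  (x : B * nat) : Prop :=
  exists a l, I n a /\ loc_eq u x (a, l).

(* Separated completion of B_u for the topology generated by the S^{-1} I n *)
(* = lim_n B_u / S^{-1} I n : compatible families of classes, two families   *)
(* being equal iff they agree in every B_u / S^{-1} I n; its fundamental     *)
(* system of open ideals is the kernels of the projections.                 *)
Definition lsub (B : comPzRingType) (u : B) (x y : B * nat) :=
  loc_add u x (loc_opp y).

Definition compl (B : comPzRingType) (I : nat -> B -> Prop) (u : B) : sring :=
  @SRing (nat -> B * nat)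
    (fun x => forall n, locI I u n (lsub u (x n.+1) (x n)))
    (fun x y => forall n, locI I u n (lsub u (x n) (y n)))
    (fun _ => (0, 0%N))
    (fun _ => (1, 0%N))
    (fun x y n => loc_add u (x n) (y n))
    (fun x y n => loc_mul (x n) (y n))
    (fun n x => locI I u n (x n)).

Definition jhat (B : comPzRingType) (I : nat -> B -> Prop) (u : B) (b : B) :
  car (compl I u) := fun _ => (b, 0%N).

Definition sigma_of (B : comPzRingType) (I : nat -> B -> Prop) (u s : B) :
  car (compl I u) := fun _ => (s, 1%N).

(* Write u = e_1(s).  As e(s) = s + uT and u is e-invariant, the Leibniz rule gives
   e_{N+1}(s a) = u e_N(a) + s e_{N+1}(a), hence u^N a = (-s)^N e_N(a) modulo any
   ideal containing all the e_i(s a).  If s a is small then, by continuity, so are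
   all the e_i(s a), and as e_N(a) tends to 0 some u^N a is small: multiplication by
   s reflects the topology of B_u, so sigma = s/u is regular in the completion.
   Moreover ehat(sigma) u = ehat(sigma u) = jhat(e(s)) = s + uT since ehat fixes u,
   and u is invertible in B_u. *)

From mathcomp Require Import all_boot all_algebra.
From mathcomp Require Import ring.
Import GRing.Theory.
Local Open Scope ring_scope.

Set Implicit Arguments.
Unset Strict Implicit.
Unset Printing Implicit Defensive.

Section RestrictedExponential.
Variables (R : sring) (e : nat -> car R -> car R).
Hypothesis e_rexp : rexp e.

Lemma rexp_congr i x y :
  rdom R x -> rdom R y -> req R x y -> req R (e i x) (e i y).
Proof. by case: e_rexp => _ [congr _]; apply: congr. Qed.

Lemma rexp_restricted x n :
  rdom R x -> exists N, forall i, (N <= i)%N -> ropen R n (e i x).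
Proof. by case: e_rexp => _ [_ [restr _]] /restr. Qed.

Lemma rexp_continuous n :
  exists m, forall x, rdom R x -> ropen R m x -> forall i, ropen R n (e i x).
Proof. by case: e_rexp => _ [_ [_ [cont _]]]. Qed.

Lemma rexp_mul i x y : rdom R x -> rdom R y ->
  req R (e i (rmul R x y)) (rsum (fun k => rmul R (e k x) (e (i - k) y)) i.+1).
Proof. by case: e_rexp => _ [_ [_ [_ [_ [mul _]]]]]; apply: mul. Qed.

Lemma rexp_e0 x : rdom R x -> req R (e 0 x) x.
Proof. by case: e_rexp => _ [_ [_ [_ [_ [_ [_ [e0 _]]]]]]]; apply: e0. Qed.

Lemma rexp_comp i j x :
  rdom R x -> req R (e j (e i x)) (rnat 'C(i + j, i) (e (i + j) x)).
Proof. by case: e_rexp => _ [_ [_ [_ [_ [_ [_ [_ comp]]]]]]]; apply: comp. Qed.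

End RestrictedExponential.

Lemma rsum_ringE (B : comPzRingType) (I : nat -> B -> Prop) (f : nat -> B) n :
  rsum (R := ringS I) f n = \sum_(k < n) f k.
Proof. by rewrite -(big_mkord xpredT) unlock /rsum /index_iota subn0. Qed.

Lemma rnat_ringE (B : comPzRingType) (I : nat -> B -> Prop) k (x : B) :
  rnat (R := ringS I) k x = x *+ k.
Proof. by elim: k => //= k ->; rewrite mulrS. Qed.

(* [sat u P a] means that [a / 1] lies in [S^{-1} P], and [loc_eqmod u P x y]
   that the fractions [x] and [y] are congruent modulo [S^{-1} P]. *)
Definition sat (B : comPzRingType) (u : B) (P : B -> Prop) (a : B) : Prop :=
  exists t, P (u ^+ t * a).

Definition loc_eqmod (B : comPzRingType) (u : B) (P : B -> Prop) (x y : B * nat) :=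
  sat u P (x.1 * u ^+ y.2 - y.1 * u ^+ x.2).

Section Saturation.
Variables (B : comPzRingType) (u : B) (P : B -> Prop).
Hypothesis P_ideal : is_ideal P.

Lemma sat0 : sat u P 0.
Proof. by case: P_ideal => P0 _ _; exists 0%N; rewrite mulr0. Qed.

Lemma satD a b : sat u P a -> sat u P b -> sat u P (a + b).
Proof.
case: P_ideal => _ PD PM [t1 Pa] [t2 Pb]; exists (t1 + t2)%N.
have -> : u ^+ (t1 + t2) * (a + b) = u ^+ t2 * (u ^+ t1 * a) + u ^+ t1 * (u ^+ t2 * b).
  by rewrite exprD; ring.
by apply: PD; apply: PM.
Qed.

Lemma satMl c a : sat u P a -> sat u P (c * a).
Proof.
case: P_ideal => _ _ PM [t Pa]; exists t.
by rewrite mulrCA; apply: PM.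
Qed.

Lemma satN a : sat u P a -> sat u P (- a).
Proof. by rewrite -mulN1r; apply: satMl. Qed.

Lemma satXK k a : sat u P (u ^+ k * a) -> sat u P a.
Proof. by case=> t Pa; exists (t + k)%N; rewrite exprD -mulrA. Qed.

Lemma eq_loc_eqmod x y : x.1 * u ^+ y.2 = y.1 * u ^+ x.2 -> loc_eqmod u P x y.
Proof. by rewrite /loc_eqmod => ->; rewrite subrr; apply: sat0. Qed.

Lemma loc_eqmod_refl x : loc_eqmod u P x x.
Proof. exact: eq_loc_eqmod. Qed.

Lemma loc_eqmod_sym x y : loc_eqmod u P x y -> loc_eqmod u P y x.
Proof. by move=> Pxy; rewrite /loc_eqmod -opprB; apply: satN. Qed.

Lemma loc_eqmod_trans y x z :
  loc_eqmod u P x y -> loc_eqmod u P y z -> loc_eqmod u P x z.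
Proof.
move=> Pxy Pyz; apply: (@satXK y.2).
have -> : u ^+ y.2 * (x.1 * u ^+ z.2 - z.1 * u ^+ x.2) =
  u ^+ z.2 * (x.1 * u ^+ y.2 - y.1 * u ^+ x.2) +
  u ^+ x.2 * (y.1 * u ^+ z.2 - z.1 * u ^+ y.2) by ring.
by apply: satD; apply: satMl.
Qed.

Lemma loc_eqmod_mul x x' y y' : loc_eqmod u P x x' -> loc_eqmod u P y y' ->
  loc_eqmod u P (loc_mul x y) (loc_mul x' y').
Proof.
move=> Pxx' Pyy'; rewrite /loc_eqmod /=.
have -> : x.1 * y.1 * u ^+ (x'.2 + y'.2) - x'.1 * y'.1 * u ^+ (x.2 + y.2) =
  y.1 * u ^+ y'.2 * (x.1 * u ^+ x'.2 - x'.1 * u ^+ x.2) +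
  x'.1 * u ^+ x.2 * (y.1 * u ^+ y'.2 - y'.1 * u ^+ y.2) by rewrite !exprD; ring.
by apply: satD; apply: satMl.
Qed.

Lemma loc_eqmod_add0l x y :
  loc_eqmod u P x (0, 0%N) -> loc_eqmod u P (loc_add u x y) y.
Proof.
rewrite /loc_eqmod /= mul0r subr0 expr0 mulr1 => Px.
have -> : (x.1 * u ^+ y.2 + y.1 * u ^+ x.2) * u ^+ y.2 - y.1 * u ^+ (x.2 + y.2) =
  u ^+ y.2 * u ^+ y.2 * x.1 by rewrite exprD; ring.
exact: satMl.
Qed.

Lemma loc_eqmod_addr0 x : loc_eqmod u P (loc_add u x (0, 0%N)) x.
Proof. by apply: eq_loc_eqmod => /=; rewrite addn0; ring. Qed.

Lemma loc_eqmod_foldr0 (g : nat -> B * nat) (l : seq nat) z :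
  (forall k, k \in l -> loc_eqmod u P (g k) (0, 0%N)) ->
  loc_eqmod u P (foldr (fun k acc => loc_add u (g k) acc) z l) z.
Proof.
elim: l => [|k l IHl] g0 /=; first exact: loc_eqmod_refl.
apply: loc_eqmod_trans (IHl _); last by move=> j lj; apply: g0; rewrite inE lj orbT.
by apply: loc_eqmod_add0l; apply: g0; rewrite inE eqxx.
Qed.

Lemma loc_eqmod_mulu x b :
  loc_eqmod u P (loc_mul x (u, 0%N)) (b, 0%N) -> loc_eqmod u P x (b, 1%N).
Proof. by rewrite /loc_eqmod /= addn0 expr1 expr0 mulr1. Qed.

Lemma loc_eqmod_sat x y : loc_eqmod u P x y -> sat u P x.1 -> sat u P y.1.
Proof.
move=> Pxy Px; apply: (@satXK x.2).
have -> : u ^+ x.2 * y.1 = u ^+ y.2 * x.1 - (x.1 * u ^+ y.2 - y.1 * u ^+ x.2) by ring.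
by apply: satD; [apply: satMl | apply: satN].
Qed.

End Saturation.

Arguments loc_eqmod_refl {B u P} P_ideal x.
Arguments loc_eqmod_addr0 {B u P} P_ideal x.

Section LinearTopology.
Variables (B : comPzRingType) (I : nat -> B -> Prop).
Hypothesis I_lintop : is_lintop I.

Let I_ideal n : is_ideal (I n) := I_lintop.1 n.
Local Hint Resolve I_ideal : core.

Lemma sat_mono (u : B) m n a : (n <= m)%N -> sat u (I m) a -> sat u (I n) a.
Proof.
elim: m => [|m IHm]; first by rewrite leqn0 => /eqP ->.
rewrite leq_eqVlt => /orP [/eqP -> // | ltnm] [t Pa].
by apply: IHm => //; exists t; apply: I_lintop.2.
Qed.

Lemma locI_sat (u : B) n x : locI I u n x <-> sat u (I n) x.1.
Proof.
case: (I_ideal n) => _ _ PM; split.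
  case=> c [l [Ic [m /= Em]]]; exists (m + l)%N.
  have -> : u ^+ (m + l) * x.1 = (u ^+ m * u ^+ x.2) * c.
    by rewrite exprD; apply/eqP; rewrite -subr_eq0 -Em; apply/eqP; ring.
  exact: PM.
case=> t Pt; exists (u ^+ t * x.1), (t + x.2)%N; split => //.
by exists 0%N => /=; rewrite exprD; ring.
Qed.

Lemma locI_lsub (u : B) n x y : locI I u n (lsub u x y) <-> loc_eqmod u (I n) x y.
Proof. by rewrite locI_sat /= mulNr. Qed.

Lemma compl_req (u : B) x y :
  req (compl I u) x y <-> forall n, loc_eqmod u (I n) (x n) (y n).
Proof. by split=> xy n; apply/locI_lsub/xy. Qed.

Lemma compl_dom_const (u : B) x : (forall n, x n = x 0%N) -> rdom (compl I u) x.
Proof. by move=> xc n; apply/locI_lsub; rewrite !xc; apply: loc_eqmod_refl. Qed.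

Lemma compl_dom_cauchy (u : B) y n m :
  rdom (compl I u) y -> (n <= m)%N -> loc_eqmod u (I n) (y m) (y n).
Proof.
move=> ydom /subnKC <-; elim: (m - n)%N => [|k IHk].
  by rewrite addn0; apply: loc_eqmod_refl.
rewrite addnS; apply: loc_eqmod_trans IHk => //.
by apply: (sat_mono (leq_addr k n)); apply/locI_lsub.
Qed.

Lemma rsum_complE (u : B) (f : nat -> car (compl I u)) m n :
  rsum f m n = foldr (fun k acc => loc_add u (f k n) acc) (0, 0%N) (iota 0 m).
Proof. by rewrite /rsum; elim: (iota 0 m) => //= k l ->. Qed.

Lemma rsum_compl_last (u : B) (f : nat -> car (compl I u)) i :
  (forall k, (k < i)%N -> req (compl I u) (f k) (r0 _)) ->
  req (compl I u) (rsum f i.+1) (f i).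
Proof.
move=> f0; apply/compl_req => n.
rewrite rsum_complE -addn1 iotaD foldr_cat /=.
apply: (loc_eqmod_trans _ _ (loc_eqmod_addr0 _ _)) => //.
apply: loc_eqmod_foldr0 => // k; rewrite mem_iota => /andP[_ ltki].
by move/compl_req: (f0 k ltki); apply.
Qed.

Section LocalSlice.
Variables (e : nat -> B -> B) (s : B).
Hypotheses (e_rexp : @rexp (ringS I) e) (s_slice : local_slice e s).

Let u := e 1 s.

Lemma e0_id x : e 0 x = x.
Proof. exact: (rexp_e0 e_rexp Logic.I). Qed.

Lemma slice_coef_const j : (0 < j)%N -> e j u = 0.
Proof.
move=> j_gt0; rewrite [LHS](rexp_comp e_rexp 1 j Logic.I) rnat_ringE.
by rewrite s_slice.2 ?mul0rn // add1n ltnS.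
Qed.

Lemma e_mul_slice N a : e N.+1 (s * a) = u * e N a + s * e N.+1 a.
Proof.
rewrite [LHS](rexp_mul e_rexp _ Logic.I Logic.I) rsum_ringE.
rewrite 2!big_ord_recl big1 => [|k _] /=; last by rewrite s_slice.2 ?mul0r.
by rewrite e0_id subn0 subSS subn0 addr0 addrC.
Qed.

Lemma slice_power_congr (P : B -> Prop) a : is_ideal P ->
  (forall i, P (e i (s * a))) -> forall N, P (u ^+ N * a - (- s) ^+ N * e N a).
Proof.
case=> P0 PD PM Pe; elim=> [|N IHN]; first by rewrite !expr0 !mul1r e0_id subrr.
have -> : u ^+ N.+1 * a - (- s) ^+ N.+1 * e N.+1 a =
  u * (u ^+ N * a - (- s) ^+ N * e N a) + (- s) ^+ N * (u * e N a + s * e N.+1 a)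
  by rewrite !exprS; ring.
by apply: PD; apply: PM; rewrite // -e_mul_slice.
Qed.

Lemma sat_slice_mulK n : exists m, forall a, sat u (I m) (s * a) -> sat u (I n) a.
Proof.
have [m e_cont] := rexp_continuous e_rexp n.
exists m => a [t Psa]; set a' := u ^+ t * a.
have Pe i : I n (e i (s * a')) by apply: e_cont; rewrite // /a' mulrCA.
have [N eN0] := rexp_restricted e_rexp n (x := a') Logic.I.
exists (N + t)%N; rewrite exprD -mulrA -/a'.
have -> : u ^+ N * a' = (u ^+ N * a' - (- s) ^+ N * e N a') + (- s) ^+ N * e N a'
  by ring.
case: (I_ideal n) => _ PD PM.
by apply: PD; [apply: slice_power_congr | apply: PM; apply: eN0].
Qed.

Let C := compl I u.
Let sigma := sigma_of I u s.

Lemma sigma_regular y : rdom C y -> req C (rmul C sigma y) (r0 C) -> req C y (r0 C).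
Proof.
move=> ydom /compl_req sy0; apply/compl_req => n.
have [m sK] := sat_slice_mulK n.
have yM0 : sat u (I n) (y (maxn m n)).1.
  apply/sK/(sat_mono (leq_maxl m n)).
  by move: (sy0 (maxn m n)); rewrite /loc_eqmod /= expr0 mulr1 mul0r subr0.
have := loc_eqmod_sat (I_ideal n) (compl_dom_cauchy ydom (leq_maxr m n)) yM0.
by rewrite /loc_eqmod /= expr0 mulr1 mul0r subr0; apply.
Qed.

Variable ehat : nat -> car C -> car C.
Hypotheses (ehat_rexp : rexp ehat)
  (ehat_jhat : forall i b, req C (ehat i (jhat I u b)) (jhat I u (e i b))).

Lemma ehat_jhat_slice_coef j : (0 < j)%N -> req C (ehat j (jhat I u u)) (r0 C).
Proof. by move=> j_gt0; move: (ehat_jhat j u); rewrite slice_coef_const. Qed.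

Lemma ehat_mul_jhat_u x i : rdom C x ->
  req C (ehat i (rmul C x (jhat I u u))) (rmul C (ehat i x) (jhat I u u)).
Proof.
move=> xdom; have udom : rdom C (jhat I u u) by apply: compl_dom_const.
have high k : (k < i)%N -> req C (rmul C (ehat k x) (ehat (i - k) (jhat I u u))) (r0 C).
  rewrite -subn_gt0 => /ehat_jhat_slice_coef /compl_req E0; apply/compl_req => n.
  apply: (loc_eqmod_trans _ (loc_eqmod_mul _ (loc_eqmod_refl _ _) (E0 n))) => //.
  by apply: eq_loc_eqmod => //=; rewrite mulr0 !mul0r.
move: (rexp_mul ehat_rexp i xdom udom) (rsum_compl_last high) (rexp_e0 ehat_rexp udom).
move=> /compl_req Emul /compl_req Elast /compl_req E0; apply/compl_req => n.
apply: (loc_eqmod_trans _ (Emul n)) => //; apply: (loc_eqmod_trans _ (Elast n)) => //.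
by rewrite subnn; apply: loc_eqmod_mul (loc_eqmod_refl _ _) (E0 n).
Qed.

Lemma ehat_sigma i n : loc_eqmod u (I n) (ehat i sigma n) (e i s, 1%N).
Proof.
have sigma_dom : rdom C sigma by apply: compl_dom_const.
have sdom : rdom C (jhat I u s) by apply: compl_dom_const.
have sudom : rdom C (rmul C sigma (jhat I u u)) by apply: compl_dom_const.
have sigma_u : req C (rmul C sigma (jhat I u u)) (jhat I u s).
  by apply/compl_req => k; apply: eq_loc_eqmod => //=; rewrite expr0 mulr1 addn0 expr1.
move: (rexp_congr ehat_rexp i sudom sdom sigma_u) (ehat_mul_jhat_u i sigma_dom).
move: (ehat_jhat i s) => /compl_req Ejs /compl_req Econg /compl_req Emul.
apply: loc_eqmod_mulu.
apply: (loc_eqmod_trans _ (loc_eqmod_sym _ (Emul n))) => //.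
exact: (loc_eqmod_trans _ (Econg n) (Ejs n)).
Qed.

End LocalSlice.

End LinearTopology.

Theorem lemma2p14 (B : comPzRingType) (I : nat -> B -> Prop) (e : nat -> B -> B) (s : B) :
  is_lintop I -> complete I -> @rexp (ringS I) e -> local_slice e s ->
  let C := compl I (e 1%N s) in
  let sigma := sigma_of I (e 1%N s) s in
  (* sigma is a regular element (non-zero-divisor) of C *)
  (forall y : car C, rdom C y -> req C (rmul C sigma y) (r0 C) -> req C y (r0 C)) /\
  (* if C is not the zero ring, then ehat(sigma) = sigma + T, where ehat is the
     (unique) restricted exponential homomorphism of C with jhat_T o e = ehat o jhat *)
  (~ req C (r1 C) (r0 C) ->
   forall ehat : nat -> car C -> car C,
     @rexp C ehat ->
     (forall i b, req C (ehat i (jhat I (e 1%N s) b)) (jhat I (e 1%N s) (e i b))) ->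
     [/\ req C (ehat 0%N sigma) sigma,
         req C (ehat 1%N sigma) (r1 C)
       & forall i, (2 <= i)%N -> req C (ehat i sigma) (r0 C)]).
Proof.
move=> I_lintop _ e_rexp s_slice C sigma; split; first exact: sigma_regular.
move=> _ ehat ehat_rexp ehat_jhat.
have ehat_sigma_e i n := ehat_sigma I_lintop e_rexp s_slice ehat_rexp ehat_jhat i n.
split=> [||i le2i]; apply/(compl_req I_lintop) => n;
  apply: (loc_eqmod_trans (I_lintop.1 n) (ehat_sigma_e _ n));
  apply: (eq_loc_eqmod (I_lintop.1 n)) => /=.
- by rewrite (e0_id e_rexp).
- by rewrite expr0 expr1 mulr1 mul1r.
- by rewrite s_slice.2 // !mul0r.
Qed.
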